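(* Let $n\ge 2$ and let $t\in\{1,\dots,n-1\}$. A code $\mathcal{C}\subseteq\{0,1\}^{n\times n}$ is a $(t,t)$-criss-cross deletion correcting code if and only if it is a $(t,t)$-criss-cross insertion correcting code.
   Context: For a binary array $\mathbf{X}$, $\mathbb{D}_{t_r,t_c}(\mathbf{X})$ denotes the set of all arrays obtained from $\mathbf{X}$ by deleting any $t_r$ rows and any $t_c$ columns, and $\mathbb{I}_{t_r,t_c}(\mathbf{X})$ the set of all binary arrays obtained by inserting $t_r$ rows and $t_c$ columns (arbitrary binary content, arbitrary positions). A code $\mathcal{C}\subseteq\{0,1\}^{n\times n}$ is a $(t_r,t_c)$-criss-cross deletion correcting code if $\mathbb{D}_{t_r,t_c}(\mathbf{X})\cap\mathbb{D}_{t_r,t_c}(\mathbf{Y})=\emptyset$ for all distinct $\mathbf{X},\mathbf{Y}\in\mathcal{C}$; a $(t_r,t_c)$-criss-cross insertion correcting code is defined analogously with $\mathbb{I}_{t_r,t_c}$. *)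

From mathcomp Require Import all_boot all_algebra.
Set Implicit Arguments. Unset Strict Implicit. Unset Printing Implicit Defensive.

Definition strict_incr (m n : nat) (f : 'I_m -> 'I_n) : Prop :=
  forall i j : 'I_m, (i < j)%N -> (f i < f j)%N.

Definition is_subarray (m1 n1 m2 n2 : nat)
    (Z : 'M[bool]_(m1, n1)) (X : 'M[bool]_(m2, n2)) : Prop :=
  exists (f : 'I_m1 -> 'I_m2) (g : 'I_n1 -> 'I_n2),
    strict_incr f /\ strict_incr g /\ Z = mxsub f g X.

Definition crisscross_del (n tr tc : nat) (X : 'M[bool]_(n, n))
    (Z : 'M[bool]_(n - tr, n - tc)) : Prop :=
  is_subarray Z X.

(* I_{tr,tc}(X): arrays obtained from X by inserting tr rows and tc columns
   (arbitrary content and positions): the original rows/columns of X sit at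
   increasing positions of Z and the inserted ones are arbitrary. *)
Definition crisscross_ins (n tr tc : nat) (X : 'M[bool]_(n, n))
    (Z : 'M[bool]_(n + tr, n + tc)) : Prop :=
  is_subarray X Z.

Definition crisscross_del_code (n tr tc : nat) (C : {set 'M[bool]_(n, n)}) : Prop :=
  forall X Y, X \in C -> Y \in C -> X <> Y ->
    forall Z, ~ (@crisscross_del n tr tc X Z /\ @crisscross_del n tr tc Y Z).

Definition crisscross_ins_code (n tr tc : nat) (C : {set 'M[bool]_(n, n)}) : Prop :=
  forall X Y, X \in C -> Y \in C -> X <> Y ->
    forall Z, ~ (@crisscross_ins n tr tc X Z /\ @crisscross_ins n tr tc Y Z).

From mathcomp Require Import all_boot all_algebra zify.
Set Implicit Arguments. Unset Strict Implicit. Unset Printing Implicit Defensive.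

(* Rows and columns can be treated separately.  If [X] and [Y] embed in a common
   (n+t) x (n+t) array, their row positions are two n-subsets of n+t positions,
   which share at least n-t positions, and likewise for columns; the entries at
   the shared positions form a common (n-t) x (n-t) subarray.  Conversely, if
   [X] and [Y] share an (n-t) x (n-t) subarray, the rows of [X] and [Y] can be
   merged into one chain of n+t rows in which exactly the matched rows are
   identified (unmatched rows of a gap go in after all the previous matched
   rows and before the next one), and likewise for columns; since [X] and [Y]
   agree on matched rows and columns, one array contains both. *)

Lemma strict_incr_ltE m n (f : 'I_m -> 'I_n) : strict_incr f ->
  forall i j, (f i < f j)%N = (i < j)%N.
Proof.
move=> hf i j; apply/idP/idP; last exact: hf.
case: (ltngtP i j) => [// | /hf + | /val_inj ->]; last by rewrite ltnn.
by move=> ji ij; have := ltn_trans ij ji; rewrite ltnn.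
Qed.

Lemma strict_incr_inj m n (f : 'I_m -> 'I_n) : strict_incr f -> injective f.
Proof.
move=> hf i j fij; apply: val_inj.
by case: (ltngtP i j) => // /hf; rewrite fij ltnn.
Qed.

Lemma strict_incr_comp k m n (f : 'I_m -> 'I_n) (g : 'I_k -> 'I_m) :
  strict_incr f -> strict_incr g -> strict_incr (f \o g).
Proof. by move=> hf hg i j /hg /hf. Qed.

Lemma strict_incr_widen_ord m n (le_mn : (m <= n)%N) : strict_incr (widen_ord le_mn).
Proof. by []. Qed.

Lemma strict_incr_enum_val N (S : {set 'I_N}) :
  strict_incr (enum_val : 'I_#|S| -> 'I_N).
Proof.
move=> i j ij; pose x0 := enum_val i.
have lt_trans : transitive (fun x y : 'I_N => (x < y)%N) by move=> y x z; apply: ltn_trans.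
have sorted_S : sorted (fun x y : 'I_N => (x < y)%N) (enum S).
  rewrite /enum_mem -enumT; apply: sorted_filter => //.
  by have := iota_ltn_sorted 0 N; rewrite -val_enum_ord sorted_map.
rewrite !(enum_val_nth x0).
by apply: (sorted_ltn_nth lt_trans x0 sorted_S) => //; rewrite inE -cardE.
Qed.

Lemma strict_incr_factor k m N (a : 'I_m -> 'I_N) (s : 'I_k -> 'I_N) :
  strict_incr a -> strict_incr s -> (forall l, s l \in codom a) ->
  exists2 p : 'I_k -> 'I_m, strict_incr p & forall l, a (p l) = s l.
Proof.
move=> ha hs s_a.
have s_pre l : exists i, a i = s l by have /codomP [i ->] := s_a l; exists i.
have [p ap] := fin_all_exists s_pre.
by exists p => // i j; rewrite -(strict_incr_ltE ha) !ap; apply: hs.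
Qed.

Lemma strict_incr_meet k m m' N (a : 'I_m -> 'I_N) (a' : 'I_m' -> 'I_N) :
  strict_incr a -> strict_incr a' -> (k + N <= m + m')%N ->
  exists (p : 'I_k -> 'I_m) (p' : 'I_k -> 'I_m'),
    [/\ strict_incr p, strict_incr p' & forall l, a (p l) = a' (p' l)].
Proof.
move=> ha ha' le_kN.
pose A := [set x in codom a]; pose A' := [set x in codom a'].
have le_k_AA' : (k <= #|A :&: A'|)%N.
  have := cardsUI A A'; have := max_card (mem (A :|: A')).
  rewrite !cardsE !card_codom ?card_ord; try exact: strict_incr_inj.
  lia.
pose s := (enum_val : 'I_#|A :&: A'| -> 'I_N) \o widen_ord le_k_AA'.
have hs : strict_incr s.
  exact: strict_incr_comp (strict_incr_enum_val (S := A :&: A')) (strict_incr_widen_ord _).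
have /all_and2 [s_a s_a'] l : s l \in codom a /\ s l \in codom a'.
  by have := enum_valP (widen_ord le_k_AA' l); rewrite !inE => /andP.
have [p hp ap] := strict_incr_factor ha hs s_a.
have [p' hp' ap'] := strict_incr_factor ha' hs s_a'.
by exists p, p'; split=> // l; rewrite ap ap'.
Qed.

Definition rank_in (K : seq nat) (v : nat) : nat := count (fun x => x < v)%N K.

Lemma rank_in_leq K u v : (u <= v)%N -> (rank_in K u <= rank_in K v)%N.
Proof. by move=> le_uv; apply: sub_count => x /leq_trans; apply. Qed.

Lemma rank_in_ltn K u v : u \in K -> (u < v)%N -> (rank_in K u < rank_in K v)%N.
Proof.
move=> + lt_uv; elim: K => //= x K IHK; rewrite inE => /predU1P [<- | /IHK lt_K].
  by rewrite ltnn lt_uv add1n ltnS rank_in_leq // ltnW.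
rewrite -addnS; apply: leq_add lt_K.
by case: ltnP => // lt_xu; rewrite (ltn_trans lt_xu lt_uv).
Qed.

Lemma rank_in_lt_size K u : u \in K -> (rank_in K u < size K)%N.
Proof. by move=> uK; apply: leq_trans (rank_in_ltn uK (ltnSn u)) (count_size _ _). Qed.

Lemma rank_in_inj K : {in K &, injective (rank_in K)}.
Proof.
move=> u v uK vK e_uv.
by case: (ltngtP u v) => [/(rank_in_ltn uK) | /(rank_in_ltn vK) | //];
  rewrite e_uv ltnn.
Qed.

Lemma rank_in_codom k m (p : 'I_k -> 'I_m) l :
  strict_incr p -> rank_in (map val (codom p)) (p l) = l.
Proof.
move=> hp; rewrite /rank_in codomE -map_comp count_map.
rewrite (eq_count (a2 := fun l' : 'I_k => (val l' < 0 + l)%N)) => [|l'] /=; last first.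
  by rewrite add0n strict_incr_ltE.
rewrite -(count_map val (fun x => x < 0 + l)%N) val_enum_ord -size_filter.
by rewrite filter_iota_ltn ?size_iota // ltnW.
Qed.

Lemma rank_in_strict_incr m N (K : seq nat) (key : 'I_m -> nat) :
  (size K <= N)%N -> {homo key : i j / (i < j)%N} -> (forall i, key i \in K) ->
  exists2 a : 'I_m -> 'I_N, strict_incr a & forall i, a i = rank_in K (key i) :> nat.
Proof.
move=> le_KN key_incr key_K.
have lt_N i : (rank_in K (key i) < N)%N := leq_trans (rank_in_lt_size (key_K i)) le_KN.
by exists (fun i => Ordinal (lt_N i)) => // i j /key_incr; apply: rank_in_ltn.
Qed.

Lemma ltn_block M b1 b2 r1 r2 :
  (r1 < M)%N -> (b1 < b2)%N -> (b1 * M + r1 < b2 * M + r2)%N.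
Proof. nia. Qed.

Lemma eq_block M b1 b2 r1 r2 : (r1 < M)%N -> (r2 < M)%N ->
  b1 * M + r1 = b2 * M + r2 -> b1 = b2 /\ r1 = r2.
Proof.
move=> lt_r1M lt_r2M e; have e_r : r1 = r2.
  by move: (congr1 (modn^~ M) e); rewrite /= !modnMDl !modn_small.
split=> //; move: e; rewrite e_r => /addIn/eqP.
by rewrite eqn_pmul2r ?(leq_ltn_trans _ lt_r2M) // => /eqP.
Qed.

(* Position [i] goes to block [b] = the number of matched positions before it;
   inside a block, unmatched positions come first, ordered by [c + i] (so that
   two chains can be kept apart by their offsets [c]), and the matched position
   closing the block comes last. *)
Definition merge_key k m (M c : nat) (p : 'I_k -> 'I_m) (i : 'I_m) : nat :=
  rank_in (map val (codom p)) i * M + (if i \in codom p then M.-1 else c + i).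

Section MergeKey.

Variables (k m M c : nat) (p : 'I_k -> 'I_m).
Hypotheses (hp : strict_incr p) (lt_cmM : (c + m < M)%N).

Lemma merge_key_offset_lt (i : 'I_m) :
  ((if i \in codom p then M.-1 else c + i) < M)%N.
Proof. by case: ifP => _; have := ltn_ord i; lia. Qed.

Lemma merge_key_codom l : merge_key M c p (p l) = l * M + M.-1.
Proof. by rewrite /merge_key rank_in_codom // codom_f. Qed.

Lemma merge_key_incr : {homo merge_key M c p : i j / (i < j)%N}.
Proof.
move=> i j lt_ij; rewrite /merge_key.
have := rank_in_leq (map val (codom p)) (ltnW lt_ij).
rewrite leq_eqVlt => /predU1P [e_b | ]; last exact: ltn_block (merge_key_offset_lt i).
rewrite e_b ltn_add2l; have /negPf -> : i \notin codom p.
  apply/codomP => -[l e_i]; move: lt_ij e_b; rewrite e_i rank_in_codom // => lt_lj.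
  have := rank_in_ltn (map_f val (codom_f p l)) lt_lj.
  by rewrite rank_in_codom // => /[swap] <-; rewrite ltnn.
by case: ifP => _; have := ltn_ord i; have := ltn_ord j; lia.
Qed.

End MergeKey.

Lemma merge_key_eq k m m' (p : 'I_k -> 'I_m) (p' : 'I_k -> 'I_m') i j :
  strict_incr p -> strict_incr p' ->
  merge_key (m + m').+1 0 p i = merge_key (m + m').+1 m p' j ->
  exists l, i = p l /\ j = p' l.
Proof.
move=> hp hp'; rewrite /merge_key => /eq_block [].
- by apply: merge_key_offset_lt; lia.
- by apply: merge_key_offset_lt; lia.
case: (boolP (i \in codom p)) => [/codomP [l ->] | _];
  case: (boolP (j \in codom p')) => [/codomP [l' ->] | _] /=;
  try by have := ltn_ord i; have := ltn_ord j; lia.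
by rewrite !rank_in_codom // => /val_inj <- _; exists l.
Qed.

Lemma strict_incr_join k m m' N (p : 'I_k -> 'I_m) (p' : 'I_k -> 'I_m') :
  strict_incr p -> strict_incr p' -> (m + m' <= N + k)%N ->
  exists (a : 'I_m -> 'I_N) (a' : 'I_m' -> 'I_N),
    [/\ strict_incr a, strict_incr a' &
        forall i j, a i = a' j -> exists l, i = p l /\ j = p' l].
Proof.
move=> hp hp' le_N.
pose M := (m + m').+1; pose kX := merge_key M 0 p; pose kY := merge_key M m p'.
have kXY l : kX (p l) = kY (p' l) by rewrite /kX /kY !merge_key_codom.
pose K := codom kX ++ image kY (~: [set j in codom p']).
have size_K : (size K <= N)%N.
  have := cardsC [set j in codom p'].
  rewrite cardsE card_codom ?card_ord; last exact: strict_incr_inj.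
  by rewrite size_cat size_codom size_image card_ord; lia.
have kX_K i : kX i \in K by rewrite mem_cat codom_f.
have kY_K j : kY j \in K.
  rewrite mem_cat; case: (boolP (j \in codom p')) => [/codomP [l ->] | nj].
    by rewrite -kXY codom_f.
  by rewrite (image_f kY) ?orbT // !inE.
have kX_incr : {homo kX : i j / (i < j)%N} by apply: merge_key_incr => //; lia.
have kY_incr : {homo kY : i j / (i < j)%N} by apply: merge_key_incr => //; lia.
have [a ha aE] := rank_in_strict_incr size_K kX_incr kX_K.
have [a' ha' a'E] := rank_in_strict_incr size_K kY_incr kY_K.
exists a, a'; split=> // i j /(congr1 (@nat_of_ord N)); rewrite aE a'E.
by move=> /(rank_in_inj (kX_K i) (kY_K j)); apply: merge_key_eq.
Qed.

Definition mxembed (T : Type) m1 m2 N1 N2 (a : 'I_m1 -> 'I_N1) (b : 'I_m2 -> 'I_N2)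
    (X : 'M[T]_(m1, m2)) (W : 'M[T]_(N1, N2)) : 'M[T]_(N1, N2) :=
  \matrix_(r, c) if ([pick i | a i == r], [pick j | b j == c]) is (Some i, Some j)
                 then X i j else W r c.

Lemma pick_preimage (T : finType) (U : eqType) (f : T -> U) x :
  injective f -> [pick y | f y == f x] = Some x.
Proof. by move=> f_inj; case: pickP => [y /eqP /f_inj -> | /(_ x)] //; rewrite eqxx. Qed.

Lemma mxembedE (T : Type) m1 m2 N1 N2 (a : 'I_m1 -> 'I_N1) (b : 'I_m2 -> 'I_N2)
    (X : 'M[T]_(m1, m2)) (W : 'M[T]_(N1, N2)) i j :
  injective a -> injective b -> mxembed a b X W (a i) (b j) = X i j.
Proof. by move=> a_inj b_inj; rewrite mxE !pick_preimage. Qed.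

Lemma common_subarray k1 k2 m1 m2 N1 N2 (X Y : 'M[bool]_(m1, m2))
    (W : 'M[bool]_(N1, N2)) :
  (k1 + N1 <= m1 + m1)%N -> (k2 + N2 <= m2 + m2)%N ->
  is_subarray X W -> is_subarray Y W ->
  exists Z : 'M[bool]_(k1, k2), is_subarray Z X /\ is_subarray Z Y.
Proof.
move=> le_N1 le_N2 [a [b [ha [hb ->]]]] [a' [b' [ha' [hb' e_Y]]]].
have [p [p' [hp hp' ap]]] := strict_incr_meet ha ha' le_N1.
have [q [q' [hq hq' bq]]] := strict_incr_meet hb hb' le_N2.
exists (mxsub p q (mxsub a b W)); split; first by exists p, q.
exists p', q'; do 2 split=> //.
by apply/matrixP => i j; rewrite e_Y !mxE ap bq.
Qed.

Lemma common_superarray k1 k2 m1 m2 N1 N2 (X Y : 'M[bool]_(m1, m2))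
    (Z : 'M[bool]_(k1, k2)) :
  (m1 + m1 <= N1 + k1)%N -> (m2 + m2 <= N2 + k2)%N ->
  is_subarray Z X -> is_subarray Z Y ->
  exists W : 'M[bool]_(N1, N2), is_subarray X W /\ is_subarray Y W.
Proof.
move=> le_N1 le_N2 [f [g [hf [hg ->]]]] [f' [g' [hf' [hg' e_Z]]]].
have [a [a' [ha ha' aa']]] := strict_incr_join hf hf' le_N1.
have [b [b' [hb hb' bb']]] := strict_incr_join hg hg' le_N2.
have [a_inj a'_inj] := (strict_incr_inj ha, strict_incr_inj ha').
have [b_inj b'_inj] := (strict_incr_inj hb, strict_incr_inj hb').
exists (mxembed a b X (mxembed a' b' Y (const_mx false))); split.
  exists a, b; do 2 split=> //.
  by apply/matrixP => i j; rewrite mxE mxembedE.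
exists a', b'; do 2 split=> //; apply/matrixP => i j; rewrite 2!mxE.
case: pickP => [i0 /eqP /aa' [l [-> ->]] | _]; last by rewrite mxembedE.
case: pickP => [j0 /eqP /bb' [l' [-> ->]] | _]; last by rewrite mxembedE.
by have := congr1 (fun M : 'M_(k1, k2) => M l l') e_Z; rewrite /= !mxE.
Qed.

Theorem corollary1 (n t : nat) (C : {set 'M[bool]_(n, n)}) :
  (2 <= n)%N -> (1 <= t)%N -> (t <= n - 1)%N ->
  @crisscross_del_code n t t C <-> @crisscross_ins_code n t t C.
Proof.
move=> _ _ le_tn.
have le_meet : (n - t + (n + t) <= n + n)%N by lia.
have le_join : (n + n <= n + t + (n - t))%N by lia.
split=> code X Y X_C Y_C neq_XY.
- move=> W [X_W Y_W].
  have [Z [Z_X Z_Y]] := common_subarray le_meet le_meet X_W Y_W.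
  exact: (code X Y X_C Y_C neq_XY Z).
- move=> Z [Z_X Z_Y].
  have [W [X_W Y_W]] := common_superarray le_join le_join Z_X Z_Y.
  exact: (code X Y X_C Y_C neq_XY W).
Qed.
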